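(* For every $i\in\{0,1,2,3\}$ the subshift $(X_i,T)$ has zero topological entropy.
   Context: Let $\tau:\mathbb N\to(0,\infty)$ be non-increasing with $\tau(n)\to0$. Fix integers $2\le q_1<q_2<\cdots$ such that for every $k\ge1$: (i) $q_{k+1}>q_k^4+3q_k$; (ii) $\tau(\lceil q_{k+1}/3\rceil)<\frac1{16q_k}$. For $k\ge1$ put $q^{(0)}_k=q_{2k}$, $q^{(1)}_k=q_{2k+1}$, $q^{(2)}_k=q^{(0)}_k-1$, $q^{(3)}_k=q^{(1)}_k-1$, and $L^{(i)}_k=\lfloor q^{(i)}_{k+1}/(3q^{(i)}_k)\rfloor$. Let $s^{(i)}_k\in\{-1,0,1\}^{\mathbb N}$ (indices $n\ge1$) be given by $s^{(i)}_k(n)=1$ if $n=jq^{(i)}_k$ with $1\le j\le L^{(i)}_k$, $s^{(i)}_k(n)=-1$ if $n=jq^{(i)}_k$ with $L^{(i)}_k<j\le2L^{(i)}_k$, and $s^{(i)}_k(n)=0$ otherwise. For $w\in\{-1,0,1\}^{\mathbb N}$ and $p\in\mathbb N_0$ let $\sigma^{-p}w$ be defined by $(\sigma^{-p}w)(n)=0$ for $1\le n\le p$ and $(\sigma^{-p}w)(n)=w(n-p)$ for $n>p$. For $l\le m$ write $w|_l^m=(w_l,\dots,w_m)$. Let $R^{(i)}_k=\{(\sigma^{-p}s^{(i)}_k)|_{q^{(i)}_k}^{q^{(i)}_{k+1}-1}:p=0,1,\dots,q^{(i)}_k\}$ and $P^{(i)}=\{y\in\{-1,0,1\}^{\mathbb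 N}: y(n)=0\text{ for }1\le n<q^{(i)}_1,\ y|_{q^{(i)}_k}^{q^{(i)}_{k+1}-1}\in R^{(i)}_k\text{ for all }k\ge1\}$. Let $Z=\{-1,0,1\}^{\mathbb N}\times\{-1,0,1\}^{\mathbb Z}$, where each factor carries the metric $d(u,v)=3^{-\min\{|m|:u_m\neq v_m\}}$ and $Z$ the maximum of the two coordinate metrics. $\sigma$ is the left shift $(\sigma u)_m=u_{m+1}$ (invertible on $\{-1,0,1\}^{\mathbb Z}$). Define $T:Z\to Z$, $T(y,z)=(\sigma y,\sigma^{y_1}z)$, and for $i\in\{0,1,2,3\}$ let $X_i=\overline{\bigcup_{n\ge0}T^n(P^{(i)}\times\{-1,0,1\}^{\mathbb Z})}$ (a closed $T$-invariant subset of $Z$). *)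

From Stdlib Require Import Reals Lra Lia ZArith Arith List Bool.
Open Scope R_scope.

(* A one-sided sequence y = (y_1, y_2, ...) is represented by a function   *)
(* yr : nat -> Z with  yr k = y_{k+1}  (so paper index n >= 1 is stored at   *)

Definition seq1 := nat -> Z.
Definition seq2 := Z -> Z.
Definition point := (seq1 * seq2)%type.

Definition py (y : seq1) (n : nat) : Z := y (n - 1)%nat.

Definition is_sym (a : Z) : Prop := a = (-1)%Z \/ a = 0%Z \/ a = 1%Z.

Definition in_Omega (x : point) : Prop :=
  (forall k, is_sym (fst x k)) /\ (forall m, is_sym (snd x m)).

(* Metric.  d1(u,v) = 3^{-min{m >= 1 : u_m <> v_m}} on {-1,0,1}^N,
   d2(u,v) = 3^{-min{|m| : u_m <> v_m}} on {-1,0,1}^Z, and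
   d((y,z),(y',z')) = max(d1(y,y'), d2(z,z')).
   Since d1 (resp. d2) is the maximum of 3^{-m} (resp. 3^{-|m|}) over the
   (attained) set of differing positions, we have literally
     d > eps  <->  some differing position m has 3^{-|m|} > eps,
     d < eps  <->  every differing position m has 3^{-|m|} < eps.
   We only ever use the metric through these two strict comparisons. *)

Definition w1 (k : nat) : R := (/ 3) ^ (S k).          (* 3^{-(k+1)} : paper index k+1 *)
Definition w2 (m : Z) : R := (/ 3) ^ (Z.abs_nat m).

Definition dist_gt (x x' : point) (eps : R) : Prop :=
  (exists k, fst x k <> fst x' k /\ eps < w1 k) \/
  (exists m, snd x m <> snd x' m /\ eps < w2 m).

Definition dist_lt (x x' : point) (eps : R) : Prop :=
  (forall k, fst x k <> fst x' k -> w1 k < eps) /\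
  (forall m, snd x m <> snd x' m -> w2 m < eps).

(* The map T(y,z) = (sigma y, sigma^{y_1} z), with (sigma u)_m = u_{m+1}. *)
Definition T (x : point) : point :=
  (fun k => fst x (S k), fun m => snd x (m + fst x 0%nat)%Z).

Definition nsep (n : nat) (eps : R) (x x' : point) : Prop :=
  exists j, (j < n)%nat /\ dist_gt (Nat.iter j T x) (Nat.iter j T x') eps.

Definition separated_list (X : point -> Prop) (n : nat) (eps : R) (E : list point) : Prop :=
  NoDup E /\ (forall x, In x E -> X x) /\
  (forall x x', In x E -> In x' E -> x <> x' -> nsep n eps x x').

(* h_top(X,T) = lim_{eps->0} limsup_n (1/n) log s(n,eps), where s(n,eps) is the
   maximal cardinality of an (n,eps)-separated subset of X.  Since
   h_top >= 0 always, h_top = 0 unfolds to: for every eps > 0 and delta > 0,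
   eventually every (n,eps)-separated subset of X has at most exp(delta n)
   elements (finite subsets suffice, an infinite one containing arbitrarily
   large finite ones). *)
Definition zero_topological_entropy (X : point -> Prop) : Prop :=
  forall eps delta : R, 0 < eps -> 0 < delta ->
  exists N : nat, forall n : nat, (N <= n)%nat ->
  forall E : list point, separated_list X n eps E ->
  INR (length E) <= exp (delta * INR n).

(* The construction.  q : nat -> nat with q_k meaningful for k >= 1.        *)

Definition qi (q : nat -> nat) (i k : nat) : nat :=
  match i with
  | 0 => q (2 * k)%nat
  | 1 => q (2 * k + 1)%nat
  | 2 => (q (2 * k)%nat - 1)%nat
  | _ => (q (2 * k + 1)%nat - 1)%nat
  end.

Definition Li (q : nat -> nat) (i k : nat) : nat :=
  (qi q i (S k) / (3 * qi q i k))%nat.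

(* s^{(i)}_k(n), paper index n >= 1 *)
Definition s_word (q : nat -> nat) (i k : nat) (n : nat) : Z :=
  let a := qi q i k in
  let L := Li q i k in
  if (1 <=? n)%nat && (n mod a =? 0)%nat then
    let j := (n / a)%nat in
    if (1 <=? j)%nat && (j <=? L)%nat then 1%Z
    else if (L <? j)%nat && (j <=? 2 * L)%nat then (-1)%Z
    else 0%Z
  else 0%Z.

(* (sigma^{-p} w)(n), paper index n >= 1 *)
Definition shiftR (p : nat) (w : nat -> Z) (n : nat) : Z :=
  if (n <=? p)%nat then 0%Z else w (n - p)%nat.

Definition window_ok (q : nat -> nat) (i k : nat) (y : seq1) : Prop :=
  exists p : nat, (p <= qi q i k)%nat /\
    forall n : nat, (qi q i k <= n)%nat -> (n <= qi q i (S k) - 1)%nat ->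
      py y n = shiftR p (s_word q i k) n.

Definition P_set (q : nat -> nat) (i : nat) (y : seq1) : Prop :=
  (forall n : nat, (1 <= n)%nat -> (n < qi q i 1)%nat -> py y n = 0%Z) /\
  (forall k : nat, (1 <= k)%nat -> window_ok q i k y).

Definition orbit_union (q : nat -> nat) (i : nat) (x : point) : Prop :=
  exists (n : nat) (y : seq1) (z : seq2),
    P_set q i y /\ (forall m, is_sym (z m)) /\ x = Nat.iter n T (y, z).

Definition closure_Omega (A : point -> Prop) (x : point) : Prop :=
  in_Omega x /\ forall eps : R, 0 < eps -> exists a, A a /\ dist_lt x a eps.

Definition X_i (q : nat -> nat) (i : nat) : point -> Prop :=
  closure_Omega (orbit_union q i).

(* Fix i and write a = q^(i).  The proof only uses that a_k >= 1 and
   a_{k+1} >= 2 a_k for k >= 1 (the conditions on tau are irrelevant here).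
   For eps > 0 choose K with 3^-K < eps.  Two points that agree on y over the
   positions [0, n+K) and on z over [-W, W], where W - K bounds the partial
   sums of y over the first n steps, are not (n,eps)-separated, because
   T^j (y,z) = (sigma^j y, sigma^(y_1+...+y_j) z).  Hence an (n,eps)-separated
   set has at most  #(windows of length N = n+K of y) * 3^(2W+1)  elements.
   Both factors are subexponential in n:
   - a word of P^(i) is a sum of "levels", level k being the word s_k placed
     in the block [a_k, a_{k+1}); a window of length N <= 2^(M-1) meets only
     M consecutive levels, and each level restricted to the window is given
     by 7 parameters <= N+1, so there are at most (N+2)^(7M) windows;
   - the prefix sums of s_k form a tent of height L_k and slope 1/a_k, so the
     partial sums over the window are at most M*C + 2N/a_{K0} for any fixed K0.
   With M ~ log2 N and a_{K0} large, 7M^2 + 4W + 2 <= delta n eventually.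
   The file develops: partial sums and list sums; the elementary word and its
   tent; the 7-parameter description of a level on a window; scale sequences
   and admissible words (window complexity and range of partial sums); the
   dynamics of T and the counting argument; the asymptotics; the theorem. *)

From Stdlib Require Import Reals ZArith Arith Lia Lra List Bool.
From Stdlib Require Import IndefiniteDescription Classical_Prop.
Import ListNotations.
Open Scope R_scope.
Local Open Scope nat_scope.

Fixpoint sumZ (f : nat -> Z) (u s : nat) : Z :=
  match s with 0 => 0%Z | S s' => (sumZ f u s' + f (u + s')%nat)%Z end.

Lemma sumZ_ext f g u s :
  (forall r, r < s -> f (u + r) = g (u + r)) -> sumZ f u s = sumZ g u s.
Proof.
  induction s as [|s IH]; intros H; simpl; auto.
  rewrite IH by (intros; apply H; lia). rewrite H by lia. reflexivity.
Qed.

Lemma sumZ_translate f c u s : sumZ (fun n => f (c + n)) u s = sumZ f (c + u) s.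
Proof. induction s as [|s IH]; simpl; auto. rewrite IH, Nat.add_assoc. reflexivity. Qed.

Lemma sumZ_split f u s t : sumZ f u (s + t) = (sumZ f u s + sumZ f (u + s) t)%Z.
Proof.
  induction t as [|t IH]; simpl.
  - rewrite Nat.add_0_r. lia.
  - rewrite Nat.add_succ_r. simpl. rewrite IH, Nat.add_assoc. lia.
Qed.

Lemma sumZ_as_difference f u s : sumZ f u s = (sumZ f 0 (u + s) - sumZ f 0 u)%Z.
Proof. rewrite (sumZ_split f 0 u s). simpl. lia. Qed.

Lemma sumZ_clip g lo hi x : lo <= hi ->
  sumZ (fun n => if (lo <=? n) && (n <? hi) then g n else 0%Z) 0 x =
  (sumZ g 0 (Nat.min (Nat.max x lo) hi) - sumZ g 0 lo)%Z.
Proof.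
  intros Hlh. induction x as [|x IH].
  - simpl. replace (Nat.min lo hi) with lo by lia. lia.
  - simpl sumZ at 1. rewrite IH. simpl (0 + x).
    destruct (Nat.leb_spec lo x); destruct (Nat.ltb_spec x hi); cbn [andb].
    + replace (Nat.min (Nat.max (S x) lo) hi) with (S x) by lia.
      replace (Nat.min (Nat.max x lo) hi) with x by lia. simpl. lia.
    + replace (Nat.min (Nat.max (S x) lo) hi) with hi by lia.
      replace (Nat.min (Nat.max x lo) hi) with hi by lia. lia.
    + replace (Nat.min (Nat.max (S x) lo) hi) with lo by lia.
      replace (Nat.min (Nat.max x lo) hi) with lo by lia. lia.
    + lia.
Qed.

Lemma sumZ_delay g p x : g 0 = 0%Z -> sumZ (fun n => g (n - p)) 0 x = sumZ g 0 (x - p).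
Proof.
  intros H0. induction x as [|x IH]; [reflexivity|].
  simpl sumZ at 1. rewrite IH. simpl (0 + x).
  destruct (Nat.leb_spec p x).
  - replace (S x - p) with (S (x - p)) by lia. reflexivity.
  - replace (S x - p) with 0 by lia. replace (x - p) with 0 by lia. rewrite H0. simpl. lia.
Qed.

Fixpoint lsum (l : list nat) (F : nat -> Z) : Z :=
  match l with nil => 0%Z | k :: l' => (F k + lsum l' F)%Z end.
Fixpoint lsumN (l : list nat) (F : nat -> nat) : nat :=
  match l with nil => 0 | k :: l' => F k + lsumN l' F end.

Lemma lsum_zero l F : (forall k, In k l -> F k = 0%Z) -> lsum l F = 0%Z.
Proof. induction l; simpl; intros H; auto. rewrite H, IHl; auto. Qed.

Lemma lsum_single l F k : NoDup l -> In k l ->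
  (forall k', In k' l -> k' <> k -> F k' = 0%Z) -> lsum l F = F k.
Proof.
  induction l as [|x l IH]; simpl; intros Hnd Hin H; [contradiction|].
  inversion Hnd; subst. destruct Hin as [->|Hin].
  - rewrite lsum_zero; [lia|]. intros k' Hk'. apply H; auto. intro; subst; contradiction.
  - rewrite IH; auto. rewrite H; auto. intro; subst; contradiction.
Qed.

Lemma lsum_sumZ_swap l F u s :
  sumZ (fun n => lsum l (fun k => F k n)) u s = lsum l (fun k => sumZ (F k) u s).
Proof.
  induction s; simpl.
  - rewrite lsum_zero; auto.
  - rewrite IHs. clear IHs. induction l; simpl; auto. lia.
Qed.

Lemma lsum_abs_bound l F G : (forall k, In k l -> (Z.abs (F k) <= Z.of_nat (G k))%Z) ->
  (Z.abs (lsum l F) <= Z.of_nat (lsumN l G))%Z.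
Proof.
  induction l as [|k l IH]; simpl; intros H; [lia|].
  specialize (IH (fun k' Hk' => H k' (or_intror Hk'))). specialize (H k (or_introl eq_refl)). lia.
Qed.

Lemma lsumN_le l F G : (forall k, In k l -> F k <= G k) -> lsumN l F <= lsumN l G.
Proof.
  induction l as [|k l IH]; simpl; intros H; [lia|].
  specialize (IH (fun k' Hk' => H k' (or_intror Hk'))). specialize (H k (or_introl eq_refl)). lia.
Qed.

Lemma lsumN_const l c : lsumN l (fun _ => c) = length l * c.
Proof. induction l; simpl; lia. Qed.

Lemma lsumN_plus l F G : lsumN l (fun k => F k + G k) = lsumN l F + lsumN l G.
Proof. induction l; simpl; lia. Qed.

Lemma lsumN_in l F k : In k l -> F k <= lsumN l F.
Proof. induction l; simpl; intros H; [contradiction|]. destruct H; [subst; lia| specialize (IHl H); lia]. Qed.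

Fixpoint words_over {T : Type} (A : list T) (m : nat) : list (list T) :=
  match m with
  | 0 => [nil]
  | S m' => map (fun pr => fst pr :: snd pr) (list_prod A (words_over A m'))
  end.

Lemma words_over_length {T} (A : list T) m : length (words_over A m) = length A ^ m.
Proof. induction m; simpl; auto. rewrite length_map, length_prod, IHm. reflexivity. Qed.

Lemma words_over_in {T} (A : list T) l : Forall (fun v => In v A) l -> In l (words_over A (length l)).
Proof.
  induction 1; simpl; auto.
  apply in_map_iff. exists (x, l). split; auto. apply in_prod; auto.
Qed.

Lemma map_seq_eq {A} (f g : nat -> A) s N : map f (seq s N) = map g (seq s N) ->
  forall k, s <= k -> k < s + N -> f k = g k.
Proof.
  revert s. induction N; intros s H k Hk1 Hk2; [lia|].
  simpl in H. injection H as H1 H2.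
  destruct (Nat.eq_dec k s); [subst; auto|]. apply (IHN (S s)); auto; lia.
Qed.

Definition word (A L m : nat) : Z :=
  if m mod A =? 0 then
    (if m <? A then 0%Z else if m <=? L * A then 1%Z
     else if m <=? 2 * L * A then (-1)%Z else 0%Z)
  else 0%Z.

Lemma s_word_eq q i k m : 1 <= qi q i k -> s_word q i k m = word (qi q i k) (Li q i k) m.
Proof.
  intros HA. unfold s_word, word. set (A := qi q i k). set (L := Li q i k).
  destruct (m mod A =? 0) eqn:Em; [|rewrite andb_false_r; reflexivity].
  apply Nat.eqb_eq in Em.
  pose proof (Nat.div_mod m A ltac:(lia)) as E. rewrite Em, Nat.add_0_r in E.
  set (j := m / A) in *.
  destruct (Nat.leb_spec 1 m); cbn [andb].
  - repeat match goal with
    | |- context [?x <? ?y] => destruct (Nat.ltb_spec x y)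
    | |- context [?x <=? ?y] => destruct (Nat.leb_spec x y)
    end; cbn [andb]; try reflexivity; nia.
  - destruct (Nat.ltb_spec m A); [reflexivity| lia].
Qed.

(* Position 0 carries no symbol, so delaying an elementary word is harmless. *)
Lemma word_0 A L : 1 <= A -> word A L 0 = 0%Z.
Proof.
  intros HA. unfold word. rewrite Nat.Div0.mod_0_l.
  destruct (Nat.ltb_spec 0 A); [reflexivity| lia].
Qed.

Definition tent (L c : nat) : Z := (Z.of_nat (Nat.min c L) - Z.of_nat (Nat.min (c - L) L))%Z.

Lemma tent_bounds L c : (0 <= tent L c <= Z.of_nat L)%Z.
Proof. unfold tent. lia. Qed.

Lemma tent_lipschitz L c c' : c' <= c -> (Z.abs (tent L c - tent L c') <= Z.of_nat (c - c'))%Z.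
Proof. unfold tent. lia. Qed.

Lemma div_step A x : 1 <= A -> 1 <= x ->
  x / A = (x - 1) / A + (if x mod A =? 0 then 1 else 0).
Proof.
  intros HA Hx.
  pose proof (Nat.div_mod (x - 1) A ltac:(lia)) as E.
  pose proof (Nat.mod_upper_bound (x - 1) A ltac:(lia)) as U.
  set (c := (x - 1) / A) in *. set (r := (x - 1) mod A) in *.
  destruct (Nat.eq_dec (r + 1) A) as [Heq|Hne].
  - assert (Hx2 : x = (c + 1) * A) by nia.
    rewrite Hx2, Nat.div_mul, Nat.Div0.mod_mul by lia. simpl. lia.
  - assert (Hx2 : x = (r + 1) + c * A) by nia.
    rewrite Hx2, Nat.div_add, Nat.Div0.mod_add, Nat.div_small, Nat.mod_small by lia.
    destruct (Nat.eqb_spec (r + 1) 0); lia.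
Qed.

Lemma div_add_le u v A : 1 <= A -> (u + v) / A <= u / A + v / A + 1.
Proof.
  intros HA.
  pose proof (Nat.div_mod u A ltac:(lia)). pose proof (Nat.div_mod v A ltac:(lia)).
  pose proof (Nat.mod_upper_bound u A ltac:(lia)). pose proof (Nat.mod_upper_bound v A ltac:(lia)).
  assert ((u + v) / A < u / A + v / A + 2) by (apply Nat.Div0.div_lt_upper_bound; nia).
  lia.
Qed.

Lemma word_prefix_sum A L x : 1 <= A -> sumZ (word A L) 0 x = tent L ((x - 1) / A).
Proof.
  intros HA. induction x as [|x IH].
  - simpl. rewrite Nat.Div0.div_0_l. unfold tent. simpl. lia.
  - simpl sumZ. rewrite IH. simpl (0 + x). replace (S x - 1) with x by lia.
    destruct (Nat.eq_dec x 0) as [->|Hx].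
    + rewrite word_0 by lia. simpl. lia.
    + rewrite (div_step A x HA ltac:(lia)). unfold word.
      destruct (x mod A =? 0) eqn:Em; [|rewrite Nat.add_0_r; lia].
      apply Nat.eqb_eq in Em.
      assert (Hx' : x = ((x - 1) / A + 1) * A).
      { pose proof (div_step A x HA ltac:(lia)) as Hd. rewrite Em in Hd. simpl in Hd.
        pose proof (Nat.div_mod x A ltac:(lia)). lia. }
      unfold tent. set (c := (x - 1) / A) in *.
      repeat match goal with
      | |- context [?x <? ?y] => destruct (Nat.ltb_spec x y)
      | |- context [?x <=? ?y] => destruct (Nat.leb_spec x y)
      end; nia.
Qed.

(* The contribution to an admissible word of one level: the elementary word
   with period A, delayed by p, restricted to the positions [A, B). *)
Definition level_part (A B L p n : nat) : Z :=
  if (A <=? n) && (n <? B) then word A L (n - p) else 0%Z.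

Lemma level_part_sum_bound A B L p u s : 1 <= A -> A <= B -> p <= A ->
  (Z.abs (sumZ (level_part A B L p) u s) <= Z.of_nat (Nat.min L (s / A + 1)))%Z.
Proof.
  intros H1 H2 H3. rewrite sumZ_as_difference. unfold level_part.
  rewrite !(sumZ_clip (fun n => word A L (n - p))) by lia.
  rewrite !(sumZ_delay (word A L)) by (apply word_0; lia).
  rewrite !word_prefix_sum by lia.
  set (X1 := Nat.min (Nat.max (u + s) A) B - p).
  set (X0 := Nat.min (Nat.max u A) B - p).
  assert (HX : X0 <= X1 /\ X1 - X0 <= s) by (unfold X0, X1; lia).
  set (c1 := (X1 - 1) / A). set (c0 := (X0 - 1) / A).
  assert (Hc : c0 <= c1) by (apply Nat.Div0.div_le_mono; lia).
  assert (Hc2 : c1 <= c0 + s / A + 1).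
  { unfold c1, c0. replace (X1 - 1) with ((X0 - 1) + (X1 - 1 - (X0 - 1))) by lia.
    pose proof (div_add_le (X0 - 1) (X1 - 1 - (X0 - 1)) A H1).
    pose proof (Nat.Div0.div_le_mono (X1 - 1 - (X0 - 1)) s A ltac:(lia)). lia. }
  pose proof (tent_bounds L c1). pose proof (tent_bounds L c0).
  pose proof (tent_lipschitz L c1 c0 Hc). lia.
Qed.

Definition block (lo hi md rho c1 c2 c3 r : nat) : Z :=
  if (lo <=? r) && (r <? hi) && ((r + rho) mod md =? 0) then
    (if r <? c1 then 0%Z else if r <? c2 then 1%Z else if r <? c3 then (-1)%Z else 0%Z)
  else 0%Z.

Fixpoint blocks (ps : list nat) (r : nat) : Z :=
  match ps with
  | lo :: hi :: md :: rho :: c1 :: c2 :: c3 :: rest =>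
      (block lo hi md rho c1 c2 c3 r + blocks rest r)%Z
  | _ => 0%Z
  end.

Lemma mod_lt_double x d : 0 < d -> x < 2 * d -> (x mod d = 0 <-> x = 0 \/ x = d).
Proof.
  intros Hd Hx. destruct (Nat.ltb_spec x d).
  - rewrite Nat.mod_small by lia. lia.
  - replace x with ((x - d) + 1 * d) by lia. rewrite Nat.Div0.mod_add, Nat.mod_small by lia. lia.
Qed.

(* On a window of length N, an arithmetic progression of step A can be
   described by a modulus and an offset that are at most N+1: when A > N it
   meets the window at most once. *)
Lemma progression_window A c N : 1 <= A -> c < A ->
  exists md rho, md <= N + 1 /\ rho <= N + 1 /\
    forall r, r < N -> ((r + rho) mod md =? 0) = ((r + c) mod A =? 0).
Proof.
  intros HA Hc. destruct (Nat.leb_spec A N).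
  - exists A, c. repeat split; lia.
  - set (r0 := if c =? 0 then 0 else A - c).
    exists (N + 1), (N + 1 - Nat.min r0 N). repeat split; [lia|lia|].
    intros r Hr. apply Bool.eq_true_iff_eq. rewrite !Nat.eqb_eq.
    rewrite (mod_lt_double (r + (N + 1 - Nat.min r0 N)) (N + 1)) by lia.
    rewrite (mod_lt_double (r + c) A) by lia.
    unfold r0. destruct (Nat.eqb_spec c 0); lia.
Qed.

Lemma level_part_window A B L p e N : 1 <= A -> A <= B -> p <= A ->
  exists lo hi md rho c1 c2 c3,
    Forall (fun v => v <= N + 1) [lo; hi; md; rho; c1; c2; c3] /\
    forall r, r < N -> block lo hi md rho c1 c2 c3 r = level_part A B L p (e + r).
Proof.
  intros HA HAB HpA.
  set (c := (e + A - p) mod A).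
  destruct (progression_window A c N HA ltac:(apply Nat.mod_upper_bound; lia))
    as [md [rho [Hmd [Hrho Hdiv]]]].
  exists (Nat.min (A - e) N), (Nat.min (B - e) N), md, rho,
    (Nat.min (A + p - e) N), (Nat.min (L * A + p + 1 - e) N), (Nat.min (2 * L * A + p + 1 - e) N).
  split; [repeat constructor; lia|].
  intros r Hr. unfold block, level_part, word.
  destruct (Nat.leb_spec (Nat.min (A - e) N) r); destruct (Nat.ltb_spec r (Nat.min (B - e) N));
  destruct (Nat.leb_spec A (e + r)); destruct (Nat.ltb_spec (e + r) B); cbn [andb]; try lia;
  try reflexivity.
  assert (Hshift : (r + c) mod A = (e + r - p) mod A).
  { unfold c. rewrite Nat.Div0.add_mod_idemp_r.
    replace (r + (e + A - p)) with ((e + r - p) + 1 * A) by lia. apply Nat.Div0.mod_add. }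
  rewrite Hdiv, Hshift by lia.
  destruct ((e + r - p) mod A =? 0); [|reflexivity].
  repeat match goal with
  | |- context [?x <? ?y] => destruct (Nat.ltb_spec x y)
  | |- context [?x <=? ?y] => destruct (Nat.leb_spec x y)
  end; try reflexivity; lia.
Qed.

Lemma level_parts_window (A B L p : nat -> nat) e N l :
  (forall k, In k l -> 1 <= A k /\ A k <= B k /\ p k <= A k) ->
  exists ps, length ps = 7 * length l /\ Forall (fun v => v <= N + 1) ps /\
    forall r, r < N -> blocks ps r = lsum l (fun k => level_part (A k) (B k) (L k) (p k) (e + r)).
Proof.
  induction l as [|k l IH]; intros H.
  - exists nil. repeat split; auto.
  - destruct IH as [ps [Hl [Hb He]]]; [intros; apply H; simpl; auto|].
    destruct (H k (or_introl eq_refl)) as [H1 [H2 H3]].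
    destruct (level_part_window (A k) (B k) (L k) (p k) e N H1 H2 H3)
      as [lo [hi [md [rho [c1 [c2 [c3 [Hb1 Hbl]]]]]]]].
    exists ([lo; hi; md; rho; c1; c2; c3] ++ ps). repeat split.
    + simpl. lia.
    + apply Forall_app. auto.
    + intros r Hr. simpl. rewrite He, Hbl by auto. reflexivity.
Qed.

Lemma geometric_tail K0 X m s :
  lsumN (seq s m) (fun k => if K0 <=? k then X / 2 ^ (k - K0) else 0) <= (2 * X) / 2 ^ (s - K0).
Proof.
  revert s. induction m as [|m IH]; intros s; cbn [seq lsumN]; [lia|].
  specialize (IH (S s)).
  destruct (Nat.leb_spec K0 s).
  - replace (S s - K0) with (S (s - K0)) in IH by lia.
    rewrite Nat.pow_succ_r', Nat.Div0.div_mul_cancel_l in IH by lia.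
    pose proof (Nat.Div0.div_mul_le X (2 ^ (s - K0)) 2). lia.
  - replace (S s - K0) with 0 in IH by lia. replace (s - K0) with 0 by lia. rewrite Nat.pow_0_r, Nat.div_1_r in *. lia.
Qed.

(* A scale sequence a (for us a = q^(i)) with a_k >= 1 and a_{k+1} >= 2 a_k
   for k >= 1.  The words of P^(i) are the admissible words below. *)
Section ScaleSequence.
Variable a : nat -> nat.

Definition Lg (k : nat) : nat := a (S k) / (3 * a k).

Definition admissible (y : seq1) : Prop :=
  (forall n, 1 <= n -> n < a 1 -> py y n = 0%Z) /\
  (forall k, 1 <= k -> exists p, p <= a k /\
     forall n, a k <= n -> n <= a (S k) - 1 -> py y n = shiftR p (word (a k) (Lg k)) n).

Definition level (p k : nat) : nat -> Z := level_part (a k) (a (S k)) (Lg k) p.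

Hypothesis a_pos : forall k, 1 <= k -> 1 <= a k.
Hypothesis a_double : forall k, 1 <= k -> 2 * a k <= a (S k).

Lemma scale_pow k m : 1 <= k -> 2 ^ m * a k <= a (k + m).
Proof.
  intros Hk. induction m as [|m IH].
  - rewrite Nat.add_0_r. simpl. lia.
  - rewrite Nat.add_succ_r. pose proof (a_double (k + m) ltac:(lia)). simpl. lia.
Qed.

Lemma scale_strict k k' : 1 <= k -> k < k' -> a k < a k'.
Proof.
  intros Hk Hkk'. pose proof (scale_pow k (k' - k) Hk) as H.
  replace (k + (k' - k)) with k' in H by lia.
  pose proof (a_pos k Hk). assert (2 <= 2 ^ (k' - k)).
  { replace (k' - k) with (S (k' - k - 1)) by lia. simpl.
    pose proof (Nat.pow_nonzero 2 (k' - k - 1)). lia. }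
  nia.
Qed.

Lemma scale_mono k k' : 1 <= k -> k <= k' -> a k <= a k'.
Proof.
  intros. destruct (Nat.eq_dec k k'); [subst; lia|]. pose proof (scale_strict k k'); lia.
Qed.

Lemma scale_ge_index k : 1 <= k -> k <= a k.
Proof.
  intros Hk. induction k as [|k IH]; [lia|].
  destruct (Nat.eq_dec k 0); [subst; apply a_pos; lia|].
  pose proof (scale_strict k (S k) ltac:(lia) ltac:(lia)). specialize (IH ltac:(lia)). lia.
Qed.

Lemma level_of_position n : exists k, 1 <= k /\ n < a (S k) /\ (k = 1 \/ a k <= n).
Proof.
  induction n as [|n IH].
  - exists 1. split; [lia|]. split; [pose proof (a_pos 2); lia| left; auto].
  - destruct IH as [k [Hk [H1 H2]]].
    destruct (Nat.ltb_spec (S n) (a (S k))).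
    + exists k. split; auto. split; auto. destruct H2; [left; auto| right; lia].
    + exists (S k). split; [lia|].
      split; [pose proof (scale_strict (S k) (S (S k))); lia| right; lia].
Qed.

Lemma admissible_delays y : admissible y -> exists pf : nat -> nat,
  forall k, 1 <= k -> pf k <= a k /\
     forall n, a k <= n -> n < a (S k) -> py y n = level (pf k) k n.
Proof.
  intros [_ HP].
  assert (H : forall k, exists p, 1 <= k -> p <= a k /\
     forall n, a k <= n -> n <= a (S k) - 1 -> py y n = shiftR p (word (a k) (Lg k)) n).
  { intros k. destruct (Nat.leb_spec 1 k).
    - destruct (HP k H) as [p Hp]. exists p; auto.
    - exists 0. intros; lia. }
  destruct (functional_choice _ H) as [pf Hpf]. exists pf.
  intros k Hk. destruct (Hpf k Hk) as [Hp1 Hp2]. split; auto.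
  intros n Hn1 Hn2. rewrite Hp2 by lia. unfold level, level_part, shiftR.
  destruct (Nat.leb_spec (a k) n); [|lia]. destruct (Nat.ltb_spec n (a (S k))); [|lia].
  destruct (Nat.leb_spec n (pf k)); [|reflexivity].
  replace (n - pf k) with 0 by lia. rewrite word_0 by (apply a_pos; lia). reflexivity.
Qed.

Lemma admissible_levels y pf M k0 n0 n : admissible y ->
  (forall k, 1 <= k -> pf k <= a k /\
     forall n, a k <= n -> n < a (S k) -> py y n = level (pf k) k n) ->
  1 <= k0 -> n0 < a (S k0) -> (k0 = 1 \/ a k0 <= n0) ->
  1 <= n0 <= n -> n < a (k0 + M) ->
  py y n = lsum (seq k0 M) (fun k => level (pf k) k n).
Proof.
  intros [HP0 _] Hpf Hk0 Hk01 Hk02 Hn1 Hn2.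
  destruct (Nat.ltb_spec n (a 1)).
  - rewrite HP0 by lia. symmetry. apply lsum_zero. intros k Hk. apply in_seq in Hk.
    unfold level, level_part. pose proof (scale_mono 1 k ltac:(lia) ltac:(lia)).
    destruct (Nat.leb_spec (a k) n); [lia|]. reflexivity.
  - destruct (level_of_position n) as [k [Hk [Hn3 Hn4]]].
    assert (Hkn : a k <= n) by (destruct Hn4; [subst; lia| lia]).
    assert (Hin : In k (seq k0 M)).
    { apply in_seq. split.
      - destruct (Nat.ltb_spec k k0); [|lia]. destruct Hk02; [lia|].
        pose proof (scale_mono (S k) k0 ltac:(lia) ltac:(lia)). lia.
      - destruct (Nat.ltb_spec k (k0 + M)); [lia|].
        pose proof (scale_mono (k0 + M) k ltac:(lia) ltac:(lia)). lia. }
    rewrite (lsum_single _ _ k (seq_NoDup _ _) Hin).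
    + destruct (Hpf k Hk) as [_ Hw]. apply Hw; auto.
    + intros k' Hk' Hne. apply in_seq in Hk'. unfold level, level_part.
      destruct (Nat.ltb_spec k' k).
      * pose proof (scale_mono (S k') k ltac:(lia) ltac:(lia)).
        destruct (Nat.ltb_spec n (a (S k'))); [lia|]. rewrite andb_false_r. reflexivity.
      * pose proof (scale_mono (S k) k' ltac:(lia) ltac:(lia)).
        destruct (Nat.leb_spec (a k') n); [lia|]. reflexivity.
Qed.

Lemma admissible_window_levels y t N M : admissible y -> 1 <= M -> N <= 2 ^ (M - 1) ->
  exists (pf : nat -> nat) (k0 : nat), 1 <= k0 /\
    (forall k, In k (seq k0 M) -> pf k <= a k) /\
    forall r, r < N -> y (t + r) = lsum (seq k0 M) (fun k => level (pf k) k (1 + t + r)).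
Proof.
  intros Hy HM HN.
  destruct (admissible_delays y Hy) as [pf Hpf].
  destruct (level_of_position (1 + t)) as [k0 [Hk0 [Hk01 Hk02]]].
  exists pf, k0. split; [exact Hk0|]. split.
  - intros k Hk. apply in_seq in Hk. apply Hpf. lia.
  - intros r Hr.
    assert (Hend : 1 + t + r < a (k0 + M)).
    { pose proof (scale_pow (S k0) (M - 1) ltac:(lia)) as H.
      replace (S k0 + (M - 1)) with (k0 + M) in H by lia.
      assert (1 <= 2 ^ (M - 1)) by (apply Nat.neq_0_lt_0, Nat.pow_nonzero; lia). nia. }
    rewrite <- (admissible_levels y pf M k0 (1 + t) (1 + t + r)) by (auto; lia).
    unfold py. f_equal. lia.
Qed.

Lemma admissible_window_blocks y t N M : admissible y -> 1 <= M -> N <= 2 ^ (M - 1) ->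
  exists ps, length ps = 7 * M /\ Forall (fun v => v <= N + 1) ps /\
    forall r, r < N -> y (t + r) = blocks ps r.
Proof.
  intros Hy HM HN.
  destruct (admissible_window_levels y t N M Hy HM HN) as [pf [k0 [Hk0 [Hpf Hdec]]]].
  destruct (level_parts_window a (fun k => a (S k)) Lg pf (1 + t) N (seq k0 M))
    as [ps [Hl [Hb He]]].
  { intros k Hk. pose proof (Hpf k Hk). apply in_seq in Hk.
    pose proof (a_pos k ltac:(lia)). pose proof (a_double k ltac:(lia)). lia. }
  exists ps. rewrite length_seq in Hl. repeat split; auto.
  intros r Hr. rewrite Hdec, He by auto. reflexivity.
Qed.

Definition window_words (N M : nat) : list (list Z) :=
  map (fun ps => map (blocks ps) (seq 0 N)) (words_over (seq 0 (N + 2)) (7 * M)).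

Lemma window_words_length N M : length (window_words N M) = (N + 2) ^ (7 * M).
Proof. unfold window_words. rewrite length_map, words_over_length, length_seq. reflexivity. Qed.

Lemma admissible_window_in y t N M : admissible y -> 1 <= M -> N <= 2 ^ (M - 1) ->
  In (map (fun r => y (t + r)) (seq 0 N)) (window_words N M).
Proof.
  intros Hy HM HN.
  destruct (admissible_window_blocks y t N M Hy HM HN) as [ps [Hl [Hb He]]].
  apply in_map_iff. exists ps. split.
  - apply map_ext_in. intros r Hr. apply in_seq in Hr. symmetry. apply He. lia.
  - rewrite <- Hl. apply words_over_in. eapply Forall_impl; [|exact Hb].
    intros v Hv. apply in_seq. cbv beta in Hv. lia.
Qed.

Lemma admissible_sum_levels y t N M : admissible y -> 1 <= M -> N <= 2 ^ (M - 1) ->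
  exists k0, 1 <= k0 /\ forall s, s <= N ->
    (Z.abs (sumZ y t s) <= Z.of_nat (lsumN (seq k0 M) (fun k => Nat.min (Lg k) (N / a k + 1))))%Z.
Proof.
  intros Hy HM HN.
  destruct (admissible_window_levels y t N M Hy HM HN) as [pf [k0 [Hk0 [Hpf Hdec]]]].
  exists k0. split; [exact Hk0|]. intros s Hs.
  rewrite (sumZ_ext y (fun n => lsum (seq k0 M) (fun k => level (pf k) k (1 + n))) t s)
    by (intros r Hr; rewrite Hdec by lia; reflexivity).
  rewrite lsum_sumZ_swap. apply lsum_abs_bound.
  intros k Hk. rewrite sumZ_translate.
  pose proof (Hpf k Hk). apply in_seq in Hk.
  pose proof (level_part_sum_bound (a k) (a (S k)) (Lg k) (pf k) (1 + t) s
    (a_pos k ltac:(lia)) (scale_mono k (S k) ltac:(lia) ltac:(lia)) ltac:(assumption)).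
  pose proof (Nat.Div0.div_le_mono s N (a k) Hs). unfold level. lia.
Qed.

(* Range of the partial sums: levels below K0 contribute a constant each,
   levels from K0 on at most N/a_{K0} in total (geometrically decreasing). *)
Lemma admissible_sum_bound K0 : 1 <= K0 -> exists C, forall y t N M s,
  admissible y -> 1 <= M -> N <= 2 ^ (M - 1) -> s <= N ->
  (Z.abs (sumZ y t s) <= Z.of_nat (M * C + 2 * (N / a K0)))%Z.
Proof.
  intros HK0. set (C := lsumN (seq 1 K0) Lg + 1). exists C.
  intros y t N M s Hy HM HN Hs.
  destruct (admissible_sum_levels y t N M Hy HM HN) as [k0 [Hk0 Hsum]].
  eapply Z.le_trans; [exact (Hsum s Hs)|]. apply inj_le.
  set (X := N / a K0).
  eapply Nat.le_trans.
  - apply (lsumN_le _ _ (fun k => C + (if K0 <=? k then X / 2 ^ (k - K0) else 0))).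
    intros k Hk. apply in_seq in Hk.
    destruct (Nat.leb_spec K0 k).
    + assert (N / a k <= X / 2 ^ (k - K0)).
      { unfold X. rewrite Nat.Div0.div_div. apply Nat.div_le_compat_l.
        pose proof (scale_pow K0 (k - K0) HK0) as Hp. replace (K0 + (k - K0)) with k in Hp by lia.
        pose proof (a_pos K0 HK0). pose proof (Nat.pow_nonzero 2 (k - K0)). nia. }
      lia.
    + pose proof (lsumN_in (seq 1 K0) Lg k ltac:(apply in_seq; lia)). unfold C. lia.
  - rewrite lsumN_plus, lsumN_const, length_seq.
    pose proof (geometric_tail K0 X M k0).
    assert (2 * X / 2 ^ (k0 - K0) <= 2 * X).
    { apply Nat.Div0.div_le_upper_bound. pose proof (Nat.pow_nonzero 2 (k0 - K0)). nia. }
    lia.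
Qed.

End ScaleSequence.

Lemma P_set_admissible q i y : (forall k, 1 <= k -> 1 <= qi q i k) ->
  P_set q i y -> admissible (qi q i) y.
Proof.
  intros Hpos [H0 Hw]. split; [exact H0|].
  intros k Hk. destruct (Hw k Hk) as [p [Hp Hy]]. exists p. split; [exact Hp|].
  intros n Hn1 Hn2. rewrite Hy by lia. unfold shiftR.
  destruct (n <=? p); [reflexivity|]. apply s_word_eq, Hpos, Hk.
Qed.

Lemma iter_fst j x k : fst (Nat.iter j T x) k = fst x (j + k).
Proof. revert k. induction j; intros k; simpl; auto. rewrite IHj. f_equal. lia. Qed.

Lemma iter_snd j x m : snd (Nat.iter j T x) m = snd x (m + sumZ (fst x) 0 j)%Z.
Proof.
  revert m. induction j; intros m; simpl.
  - f_equal. lia.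
  - rewrite IHj, iter_fst. f_equal. rewrite Nat.add_0_r. lia.
Qed.

Lemma X_i_windows q i x N : (forall k, 1 <= k -> 1 <= qi q i k) -> X_i q i x ->
  exists y t, admissible (qi q i) y /\ forall k, k <= N -> fst x k = y (t + k).
Proof.
  intros Hpos [_ Hcl].
  assert (Hw : (0 < w1 N)%R) by (unfold w1; apply pow_lt; apply Rinv_0_lt_compat; lra).
  destruct (Hcl _ Hw) as [x0 [[t [y [z [HP [_ ->]]]]] [Hd _]]].
  exists y, t. split; [apply P_set_admissible; auto|].
  intros k Hk. destruct (Z.eq_dec (fst x k) (fst (Nat.iter t T (y, z)) k)) as [E|E].
  - rewrite E, iter_fst. reflexivity.
  - exfalso. specialize (Hd k E). unfold w1 in Hd.
    assert (((/ 3) ^ S N <= (/ 3) ^ S k)%R).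
    { rewrite !pow_inv. apply Rinv_le_contravar; [apply pow_lt; lra|].
      apply Rle_pow; [lra| lia]. }
    lra.
Qed.

Lemma agree_not_separated n eps K W x x' :
  (forall k, K <= k -> ((/ 3) ^ k < eps)%R) ->
  (forall j, j <= n -> (Z.abs (sumZ (fst x) 0 j) + Z.of_nat K <= Z.of_nat W)%Z) ->
  (forall k, k < n + K -> fst x k = fst x' k) ->
  (forall m, (Z.abs m <= Z.of_nat W)%Z -> snd x m = snd x' m) ->
  ~ nsep n eps x x'.
Proof.
  intros Hsmall Hrange Hy Hz [j [Hj [[k [Hk Hw]] | [m [Hm Hw]]]]].
  - rewrite !iter_fst in Hk. apply Hk, Hy.
    destruct (Nat.leb_spec K (S k)); [|lia].
    specialize (Hsmall _ H). unfold w1 in Hw. lra.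
  - rewrite !iter_snd in Hm. unfold seq1, seq2 in Hm.
    assert (Hsum : sumZ (fst x) 0 j = sumZ (fst x') 0 j) by (apply sumZ_ext; intros; apply Hy; lia).
    rewrite <- Hsum in Hm. apply Hm, Hz.
    destruct (Nat.leb_spec K (Z.abs_nat m)).
    + specialize (Hsmall _ H). unfold w2 in Hw. lra.
    + specialize (Hrange j ltac:(lia)). lia.
Qed.

Definition z_window (W : nat) : list Z :=
  map (fun i => (Z.of_nat i - Z.of_nat W)%Z) (seq 0 (2 * W + 1)).

Lemma map_z_window_eq (f g : Z -> Z) W : map f (z_window W) = map g (z_window W) ->
  forall m, (Z.abs m <= Z.of_nat W)%Z -> f m = g m.
Proof.
  unfold z_window. rewrite !map_map. intros H m Hm.
  pose proof (map_seq_eq _ _ _ _ H (Z.to_nat (m + Z.of_nat W)) ltac:(lia) ltac:(lia)) as H'.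
  simpl in H'. replace (Z.of_nat (Z.to_nat (m + Z.of_nat W)) - Z.of_nat W)%Z with m in H' by lia.
  exact H'.
Qed.

Lemma separated_count X Wl n eps K W E :
  (forall k, K <= k -> ((/ 3) ^ k < eps)%R) ->
  (forall x, X x -> in_Omega x) ->
  (forall x, In x E -> In (map (fst x) (seq 0 (n + K))) Wl) ->
  (forall x, In x E -> forall j, j <= n -> (Z.abs (sumZ (fst x) 0 j) + Z.of_nat K <= Z.of_nat W)%Z) ->
  separated_list X n eps E ->
  length E <= length Wl * 3 ^ (2 * W + 1).
Proof.
  intros Hsmall HO HWl Hrange [HND [HEX Hsep]].
  set (code := fun x : point => (map (fst x) (seq 0 (n + K)), map (snd x) (z_window W))).
  assert (Hincl : incl (map code E) (list_prod Wl (words_over [(-1)%Z; 0%Z; 1%Z] (2 * W + 1)))).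
  { intros c Hc. apply in_map_iff in Hc. destruct Hc as [x [<- Hx]].
    apply in_prod; [apply HWl, Hx|].
    replace (2 * W + 1) with (length (map (snd x) (z_window W)))
      by (unfold z_window; rewrite !length_map, length_seq; reflexivity).
    apply words_over_in, Forall_forall. intros v Hv. apply in_map_iff in Hv.
    destruct Hv as [m [<- _]]. destruct (HO x (HEX x Hx)) as [_ Hs].
    destruct (Hs m) as [-> | [-> | ->]]; simpl; auto. }
  assert (Hnd : NoDup (map code E)).
  { apply NoDup_map_NoDup_ForallPairs; auto.
    intros x x' Hx Hx' Heq. destruct (classic (x = x')) as [|Hne]; auto.
    exfalso. injection Heq as Heq1 Heq2.
    apply (agree_not_separated n eps K W x x' Hsmall (Hrange x Hx)).
    - intros k Hk. apply (map_seq_eq _ _ _ _ Heq1); lia.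
    - exact (map_z_window_eq _ _ W Heq2).
    - exact (Hsep x x' Hx Hx' Hne). }
  pose proof (NoDup_incl_length Hnd Hincl) as Hlen.
  rewrite length_map, length_prod, words_over_length in Hlen. exact Hlen.
Qed.

Lemma window_count_le_pow2 N M W : N + 2 <= 2 ^ M ->
  (N + 2) ^ (7 * M) * 3 ^ (2 * W + 1) <= 2 ^ (7 * M * M + 4 * W + 2).
Proof.
  intros HN.
  assert ((N + 2) ^ (7 * M) <= 2 ^ (7 * M * M)).
  { eapply Nat.le_trans; [apply Nat.pow_le_mono_l, HN|].
    rewrite <- Nat.pow_mul_r. apply Nat.pow_le_mono_r; nia. }
  assert (3 ^ (2 * W + 1) <= 2 ^ (4 * W + 2)).
  { eapply Nat.le_trans; [apply (Nat.pow_le_mono_l 3 4); lia|].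
    replace 4 with (2 ^ 2) at 1 by reflexivity.
    rewrite <- Nat.pow_mul_r. apply Nat.pow_le_mono_r; lia. }
  rewrite <- Nat.add_assoc, (Nat.pow_add_r 2 (7 * M * M)). apply Nat.mul_le_mono; auto.
Qed.

Lemma cube_le_pow2 l : 10 <= l -> l * l * l <= 2 ^ l.
Proof. intros Hl. induction Hl; [simpl; lia|]. rewrite Nat.pow_succ_r'. nia. Qed.

(* The exponent 7 M^2 + 4 W + 2, with M ~ log2 n and W ~ M C + 2 n / a_{K0} + K,
   is eventually at most n / D once a_{K0} >= 32 D. *)
Lemma exponent_budget D C K : exists n0, forall n X aK0 M,
  n0 <= n -> X * aK0 <= n + K -> 32 * D <= aK0 -> M = Nat.log2 (n + K + 2) + 2 ->
  D * (7 * M * M + 4 * (M * C + 2 * X + K) + 2) <= n.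
Proof.
  set (c := 2 * D * (7 + 4 * C)). set (c' := 2 * D * (4 * K + 2)).
  assert (Hpoly : forall l, 10 + 16 * c + c' <= l -> c * ((l + 3) * (l + 3)) + c' <= 2 ^ l).
  { intros l Hl. pose proof (cube_le_pow2 l ltac:(lia)).
    assert (c * ((l + 3) * (l + 3)) <= 4 * c * (l * l)) by nia.
    assert (16 * c * (l * l) <= l * l * l) by nia.
    assert (c' * 2 <= l * l * l) by nia. nia. }
  exists (K + 2 + 2 ^ (10 + 16 * c + c')). intros n X aK0 M Hn HX HaK HMdef.
  set (l := Nat.log2 n).
  assert (Hl1 : 2 ^ l <= n) by (apply Nat.log2_spec; lia).
  assert (Hl2 : 10 + 16 * c + c' <= l) by (apply Nat.log2_le_pow2; lia).
  assert (HM : M <= l + 3).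
  { rewrite HMdef. unfold l. pose proof (Nat.log2_le_mono (n + K + 2) (2 * n) ltac:(lia)).
    rewrite Nat.log2_double in H by lia. lia. }
  specialize (Hpoly l Hl2). unfold c, c' in Hpoly.
  assert (16 * D * X <= n) by nia.
  assert (M * M <= (l + 3) * (l + 3)) by nia.
  assert (M * C <= (l + 3) * (l + 3) * C) by nia.
  nia.
Qed.

Lemma pow2_le_exp Q : (2 ^ Q <= exp (INR Q))%R.
Proof.
  induction Q as [|Q IH].
  - simpl. rewrite exp_0. lra.
  - rewrite S_INR, exp_plus. simpl.
    pose proof (exp_ineq1 1 ltac:(lra)). assert (0 <= 2 ^ Q)%R by (apply pow_le; lra). nra.
Qed.

Lemma count_le_exp (c Q D n : nat) (delta : R) :
  (/ INR D < delta)%R -> 0 < D -> D * Q <= n -> c <= 2 ^ Q ->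
  (INR c <= exp (delta * INR n))%R.
Proof.
  intros Hdelta HD HQ Hc.
  apply (Rle_trans _ (INR (2 ^ Q))); [apply le_INR; exact Hc|].
  rewrite pow_INR. simpl (INR 2).
  apply (Rle_trans _ _ _ (pow2_le_exp Q)).
  assert (HQn : (INR Q <= delta * INR n)%R).
  { assert (HDQ : (INR D * INR Q <= INR n)%R) by (rewrite <- mult_INR; apply le_INR; exact HQ).
    assert (HD0 : (0 < INR D)%R) by (apply lt_0_INR; lia).
    pose proof (pos_INR Q). pose proof (pos_INR n).
    replace (INR Q) with (/ INR D * (INR D * INR Q))%R by (field; lra).
    apply (Rle_trans _ (/ INR D * INR n)).
    - apply Rmult_le_compat_l; [apply Rlt_le, Rinv_0_lt_compat; lra| lra].
    - apply Rmult_le_compat_r; lra. }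
  destruct (Rle_lt_or_eq_dec _ _ HQn) as [Hlt|Heq]; [apply Rlt_le, exp_increasing, Hlt|].
  rewrite Heq. apply Rle_refl.
Qed.

Theorem zero_entropy_of_admissible_windows (X : point -> Prop) (a : nat -> nat) :
  (forall k, 1 <= k -> 1 <= a k) -> (forall k, 1 <= k -> 2 * a k <= a (S k)) ->
  (forall x, X x -> in_Omega x) ->
  (forall x, X x -> forall N, exists y t, admissible a y /\ forall k, k <= N -> fst x k = y (t + k)) ->
  zero_topological_entropy X.
Proof.
  intros Ha1 Ha2 HO HW eps delta Heps Hdelta.
  destruct (pow_lt_1_zero (/ 3) ltac:(rewrite Rabs_right; lra) eps Heps) as [K HK].
  assert (Hsmall : forall k, K <= k -> ((/ 3) ^ k < eps)%R).
  { intros k Hk. specialize (HK k Hk).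
    rewrite Rabs_right in HK; [exact HK| apply Rle_ge, pow_le; lra]. }
  destruct (archimed_cor1 delta Hdelta) as [D [HD1 HD2]].
  set (K0 := 32 * D).
  destruct (admissible_sum_bound a Ha1 Ha2 K0 ltac:(unfold K0; lia)) as [C HC].
  destruct (exponent_budget D C K) as [n0 Hn0].
  exists n0. intros n Hn E HE. pose proof HE as [_ [HEX _]].
  set (N := n + K). set (M := Nat.log2 (N + 2) + 2). set (W := M * C + 2 * (N / a K0) + K).
  assert (HM : N + 2 <= 2 ^ (M - 1)).
  { unfold M. replace (Nat.log2 (N + 2) + 2 - 1) with (S (Nat.log2 (N + 2))) by lia.
    pose proof (Nat.log2_spec (N + 2) ltac:(lia)). lia. }
  assert (Hcount : length E <= (N + 2) ^ (7 * M) * 3 ^ (2 * W + 1)).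
  { rewrite <- window_words_length.
    apply (separated_count X (window_words N M) n eps K W E Hsmall HO); [| |exact HE].
    - intros x Hx. destruct (HW x (HEX x Hx) N) as [y [t [Hy Hyx]]].
      replace (map (fst x) (seq 0 (n + K))) with (map (fun r => y (t + r)) (seq 0 N)).
      + apply (admissible_window_in a Ha1 Ha2); auto; lia.
      + apply map_ext_in. intros r Hr. apply in_seq in Hr. symmetry. apply Hyx. lia.
    - intros x Hx j Hj. destruct (HW x (HEX x Hx) N) as [y [t [Hy Hyx]]].
      assert (Hsum : sumZ (fst x) 0 j = sumZ y t j).
      { rewrite <- (Nat.add_0_r t), <- sumZ_translate.
        apply sumZ_ext. intros r Hr. apply Hyx. unfold N. lia. }
      rewrite Hsum. pose proof (HC y t N M j Hy ltac:(lia) ltac:(lia) ltac:(unfold N; lia)).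
      unfold W. lia. }
  apply (count_le_exp _ (7 * M * M + 4 * W + 2) D n delta HD1 HD2).
  - unfold W. apply (Hn0 n (N / a K0) (a K0) M Hn); [|unfold K0|reflexivity].
    + rewrite Nat.mul_comm. apply Nat.Div0.mul_div_le.
    + apply (scale_ge_index a Ha1 Ha2). lia.
  - eapply Nat.le_trans; [exact Hcount|]. apply window_count_le_pow2.
    pose proof (Nat.pow_le_mono_r 2 (M - 1) M ltac:(lia) ltac:(lia)). lia.
Qed.

Lemma q_scale q : 2 <= q 1 -> (forall k, 1 <= k -> q k ^ 4 + 3 * q k < q (S k)) ->
  forall j, 1 <= j -> 2 <= q j /\ 2 * q j <= q (S j).
Proof.
  intros H1 Hg j Hj.
  assert (Hd : forall j, 1 <= j -> 2 * q j <= q (S j)) by (intros j' Hj'; specialize (Hg j' Hj'); lia).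
  split; [|exact (Hd j Hj)].
  induction Hj as [|j Hj IH]; [exact H1|]. specialize (Hd j Hj). lia.
Qed.

Lemma qi_as_subsequence q i k : i < 4 -> qi q i k = q (2 * k + i mod 2) - i / 2.
Proof.
  intros Hi. destruct i as [|[|[|[|i]]]]; try lia; cbn [qi Nat.modulo Nat.div];
  simpl (0 mod 2); simpl (1 mod 2); simpl (2 mod 2); simpl (3 mod 2);
  simpl (0 / 2); simpl (1 / 2); simpl (2 / 2); simpl (3 / 2);
  rewrite ?Nat.add_0_r, ?Nat.sub_0_r; reflexivity.
Qed.

Lemma qi_scale q i : i < 4 -> 2 <= q 1 -> (forall k, 1 <= k -> q k ^ 4 + 3 * q k < q (S k)) ->
  (forall k, 1 <= k -> 1 <= qi q i k) /\ (forall k, 1 <= k -> 2 * qi q i k <= qi q i (S k)).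
Proof.
  intros Hi H1 Hg. pose proof (q_scale q H1 Hg) as Hq.
  assert (Hc : i / 2 < 2) by (apply Nat.Div0.div_lt_upper_bound; lia).
  split; intros k Hk; rewrite !qi_as_subsequence by exact Hi.
  - pose proof (Hq (2 * k + i mod 2) ltac:(lia)). lia.
  - replace (2 * S k + i mod 2) with (S (S (2 * k + i mod 2))) by lia.
    pose proof (Hq (2 * k + i mod 2) ltac:(lia)). pose proof (Hq (S (2 * k + i mod 2)) ltac:(lia)).
    lia.
Qed.

Open Scope R_scope.

(* Each (X_i, T) has zero topological entropy. *)

Theorem mainTheorem6
  (tau : nat -> R) (q : nat -> nat)
  (tau_pos : forall n : nat, (1 <= n)%nat -> 0 < tau n)
  (tau_noninc : forall m n : nat, (1 <= m)%nat -> (m <= n)%nat -> tau n <= tau m)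
  (tau_lim : forall e : R, 0 < e -> exists N : nat, forall n : nat, (N <= n)%nat -> tau n < e)
  (q1_ge2 : (2 <= q 1%nat)%nat)
  (q_incr : forall k : nat, (1 <= k)%nat -> (q k < q (S k))%nat)
  (q_growth : forall k : nat, (1 <= k)%nat -> (q k ^ 4 + 3 * q k < q (S k))%nat)
  (q_tau : forall k : nat, (1 <= k)%nat ->
     tau ((q (S k) + 2) / 3)%nat < / (16 * INR (q k))) :
  forall i : nat, (i < 4)%nat -> zero_topological_entropy (X_i q i).
Proof.
  intros i Hi. destruct (qi_scale q i Hi q1_ge2 q_growth) as [Hpos Hdouble].
  apply (zero_entropy_of_admissible_windows (X_i q i) (qi q i) Hpos Hdouble).
  - intros x [HO _]. exact HO.
  - intros x Hx N. exact (X_i_windows q i x N Hpos Hx).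
Qed.
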